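(* Let $a,b$ be polynomials with $a(0)\ne0$, $b(0)\ne0$, and $a(z)a^*(z)=b(z)b^*(z)$ for infinitely many $z\in\mathbb C^*$. Then $a$ and $b$ have the same degree $m$. Let $C_a,C_b$ be their leading coefficients, $\mathcal R_a=\{\alpha_1,\dots,\alpha_m\}$, $\mathcal R_b=\{\beta_1,\dots,\beta_m\}$ the multisets of their zeros, $\mathcal R_{ab}$ the multiset of common zeros, $\overline{\mathcal R}_a:=\mathcal R_a\setminus\mathcal R_{ab}$, $\overline{\mathcal R}_b:=\mathcal R_b\setminus\mathcal R_{ab}$. Then: (a) the multisets $\{\alpha_1,\dots,\alpha_m,1/\overline{\alpha_1},\dots,1/\overline{\alpha_m}\}$ and $\{\beta_1,\dots,\beta_m,1/\overline{\beta_1},\dots,1/\overline{\beta_m}\}$ are equal; (b) $\mathcal R_a,\mathcal R_b,\mathcal R_{ab}$ have the same multiplicity for each zero on the unit circle $\mathbb T$, and $\overline{\mathcal R}_a,\overline{\mathcal R}_b$ contain no element of $\mathbb T$; (c) if $y\in\overline{\mathcal R}_a$ with multiplicity $k$, then $y\notin\overline{\mathcal R}_b$, $1/\overline y\notin\overline{\mathcal R}_a$, and $1/\overline y\in\overline{\mathcal R}_b$ with multiplicity $k$ (and symmetrically with $a,b$ exchanged); (d) $|\overline{\mathcal R}_a|=|\overline{\mathcal R}_b|$ and $\prod_{y\in\overline{\mathcal R}_a}y=\prod_{y\in\overline{\mathcal R}_b}1/\overline y$; (e) $C_b=\lambda C_a\big|\prod_{y\in\overline{\mathcal R}_a}y\big|$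 for some $\lambda\in\mathbb T$; (f) for a fixed polynomial $a$ with $a(0)\ne0$, the number of polynomials $b$ satisfying the hypotheses together with $b(0)\in\mathbb R$, $b(0)>0$ (respectively $b(0)<0$) equals $\mathcal N(R)$, where $R:=\{\alpha_1,\dots,\alpha_m,1/\overline{\alpha_1},\dots,1/\overline{\alpha_m}\}$.
   Context: $\mathbb T$ is the unit circle, $\mathbb C^*=\mathbb C\setminus\{0\}$, and for a Laurent polynomial $a$, $a^*(z):=\overline{a(1/\overline z)}$. Multisets: $B\subseteq A$ means each multiplicity in $B$ is at most that in $A$, and $A\setminus B$ is the unique multiset with $(A\setminus B)\cup B=A$. Counting function: for a finite multiset $R\subset\mathbb C^*$, define the equivalence relation $\alpha\sim\beta$ iff $\alpha=\beta$ or $\alpha=1/\overline\beta$, and suppose every equivalence class (counted as a multiset) has even size. For a class $y$, set $\sharp(y):=1$ if $y$ meets $\mathbb T$ and $\sharp(y):=1+|y|/2$ otherwise; then $\mathcal N(R):=\prod_{y\in R/\sim}\sharp(y)$. *)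

(* The complex numbers are modelled by an arbitrary
   numClosedFieldType C (e.g. complex R for R : rcfType), with conjugation
   z^* and norm `|z|. *)
From HB Require Import structures.
From mathcomp Require Import all_boot all_order all_algebra.
Set Implicit Arguments. Unset Strict Implicit. Unset Printing Implicit Defensive.
Import Order.TTheory GRing.Theory Num.Theory.
Local Open Scope ring_scope.

Section Defs.
Variable C : numClosedFieldType.

Definition invc (z : C) : C := (z^*)^-1.

Definition pstar (a : {poly C}) (z : C) : C := (a.[invc z])^*.

Definition infinitely_many (P : C -> Prop) : Prop :=
  forall s : seq C, exists z, z \notin s /\ P z.

Definition same_modulus (a b : {poly C}) : Prop :=
  infinitely_many (fun z => z != 0 /\ a.[z] * pstar a z = b.[z] * pstar b z).

Definition zeros_of (a : {poly C}) (s : seq C) : Prop :=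
  a = lead_coef a *: \prod_(z <- s) ('X - z%:P).

(* multisets are represented by sequences up to permutation *)
Definition msub (A B : seq C) : seq C := foldr (fun x acc => rem x acc) A B.
Definition mint (A B : seq C) : seq C := msub A (msub A B).

Definition eqv (x y : C) : bool := (x == y) || (x == invc y).

Definition eclass (R : seq C) (y : C) : seq C := [seq x <- R | eqv x y].

Definition eclasses (R : seq C) : seq (seq C) := undup [seq eclass R y | y <- R].

Definition sharp (c : seq C) : nat :=
  if has (fun x => `|x| == 1) c then 1%N else (1 + size c %/ 2)%N.

Definition Ncount (R : seq C) : nat := \prod_(c <- eclasses R) sharp c.

End Defs.

From HB Require Import structures.
From mathcomp Require Import all_boot all_order all_algebra.
From mathcomp Require Import ring zify.
Set Implicit Arguments. Unset Strict Implicit. Unset Printing Implicit Defensive.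
Import Order.TTheory GRing.Theory Num.Theory.
Local Open Scope ring_scope.

(* For z != 0, a(z) a^*(z) = K_a z^-m Q_a(z), where Q_a is the monic polynomial
   whose zeros are the zeros alpha of a together with their reflections 1/conj alpha,
   and K_a = |C_a|^2 prod (- conj alpha).  Equality at infinitely many points is
   thus a polynomial identity, giving deg a = deg b, Q_a = Q_b, i.e. (a), and
   K_a = K_b.  Comparing the multiplicities of x and 1/conj x in Q_a = Q_b shows that
   the zeros of b are the common zeros plus the reflections of the excess zeros of a,
   which gives (b)-(d); feeding this into K_a = K_b gives |C_b| = |C_a| |prod excess|,
   i.e. (e).
   For (f), a solution b is determined by its zero multiset r, a "half" of R
   (r together with its reflection is R), and by the sign of b(0), since |C_b| is
   fixed by (e).  Halves are chosen independently on each class {y, 1/conj y}: on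
   the unit circle there is one choice, off it a class of size 2k leaves k + 1. *)

Section Reflection.
Variable C : numClosedFieldType.
Implicit Types (x y z : C) (r s : seq C).

Lemma invcK : involutive (@invc C).
Proof. by move=> x; rewrite /invc fmorphV /= conjCK invrK. Qed.

Lemma invc_eq0 x : (invc x == 0) = (x == 0).
Proof. by rewrite /invc invr_eq0 conjC_eq0. Qed.

Lemma conjC_invc x : (invc x)^* = x^-1.
Proof. by rewrite /invc fmorphV /= conjCK. Qed.

Lemma invc_eq x y : (invc x == y) = (x == invc y).
Proof. by apply/eqP/eqP => [<-|->]; rewrite invcK. Qed.

Lemma invc_fixE x : x != 0 -> (invc x == x) = (`|x| == 1).
Proof.
move=> x0; rewrite /invc -[`|x| == 1](@eqrXn2 _ 2) ?normr_ge0 // expr1n normCK.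
have cx0 : x^* != 0 by rewrite conjC_eq0.
apply/eqP/eqP => [h|h]; first by rewrite -{1}h mulVf.
by rewrite -[LHS]mul1r -h mulfK.
Qed.

Lemma invc_norm1 x : `|x| = 1 -> invc x = x.
Proof.
move=> x1; have x0 : x != 0 by rewrite -normr_gt0 x1 ltr01.
by apply/eqP; rewrite invc_fixE // x1.
Qed.

Lemma count_map_invc x s : count_mem x (map (@invc C) s) = count_mem (invc x) s.
Proof. by rewrite count_map; apply: eq_count => y /=; rewrite invc_eq. Qed.

Definition sym_mset r := r ++ map (@invc C) r.

Lemma count_sym_mset x r :
  count_mem x (sym_mset r) = (count_mem x r + count_mem (invc x) r)%N.
Proof. by rewrite count_cat count_map_invc. Qed.

Definition is_half R r :=
  forall x, (count_mem x r + count_mem (invc x) r = count_mem x R)%N.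

Lemma perm_sym_mset_half r R : perm_eq (sym_mset r) R <-> is_half R r.
Proof.
split=> [/permP h x | h]; first by rewrite -count_sym_mset h.
by apply/allP => x _ /=; rewrite count_sym_mset h.
Qed.

Lemma eqv_refl x : eqv x x.
Proof. by rewrite /eqv eqxx. Qed.

Lemma eqv_sym x y : eqv x y = eqv y x.
Proof. by rewrite /eqv eq_sym [x == _]eq_sym invc_eq. Qed.

Lemma eqv_trans x y z : eqv x y -> eqv y z -> eqv x z.
Proof.
by rewrite /eqv => /orP[/eqP->|/eqP->] /orP[/eqP->|/eqP->]; rewrite ?invcK eqxx ?orbT.
Qed.

Lemma eqv_invc x y : eqv (invc x) y = eqv x y.
Proof. by rewrite /eqv invc_eq (inj_eq (can_inj invcK)) orbC. Qed.

Lemma prod_oppV_mul_conj r : 0 \notin r ->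
  \prod_(y <- r) (- y^-1) * (\prod_(y <- r) y * (\prod_(y <- r) y)^*) =
  \prod_(y <- r) (- y^*).
Proof.
elim: r => [|y r IH]; first by rewrite !big_nil rmorph1 !mulr1.
rewrite in_cons negb_or eq_sym => /andP[y0 /IH{}IH].
rewrite !big_cons rmorphM /= -IH; have cy0 : y^* != 0 by rewrite conjC_eq0.
move: (\prod_(j <- r) - j^-1) (\prod_(j <- r) j) (\prod_(j <- r) j)^* => A B D.
by field; exact: y0.
Qed.

Lemma prodf_seq_neq0_notin0 (F : C -> C) r :
  0 \notin r -> (forall x, x != 0 -> F x != 0) -> \prod_(x <- r) F x != 0.
Proof.
move=> r0 F0; rewrite prodf_seq_neq0; apply/allP => x xr /=.
by apply: F0; apply: contraNneq r0 => <-.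
Qed.

End Reflection.

Lemma count_mem_gt0 (T : eqType) (x : T) (s : seq T) : (0 < count_mem x s)%N = (x \in s).
Proof. by rewrite -has_count has_pred1. Qed.

Section Multisets.
Variable C : numClosedFieldType.
Implicit Types (x y : C) (A B : seq C).

Lemma count_rem x y A : count_mem x (rem y A) = (count_mem x A - (x == y))%N.
Proof.
elim: A => [|z A IH] /=; first by rewrite sub0n.
case: (eqVneq z y) => [->|zy] /=; first by rewrite eq_sym addKn.
rewrite IH; case: (eqVneq x y) => [->|_]; last by rewrite !subn0.
by rewrite (negbTE zy) !add0n.
Qed.

Lemma count_msub x A B : count_mem x (msub A B) = (count_mem x A - count_mem x B)%N.
Proof.
elim: B => [|b B IH] /=; first by rewrite subn0.
by rewrite count_rem IH /= eq_sym -subnDA addnC.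
Qed.

Lemma count_mint x A B : count_mem x (mint A B) = minn (count_mem x A) (count_mem x B).
Proof. by rewrite /mint !count_msub; lia. Qed.

Lemma count_msub_mint x A B :
  count_mem x (msub A (mint A B)) = (count_mem x A - count_mem x B)%N.
Proof. by rewrite count_msub count_mint; lia. Qed.

Lemma count_msub_mintr x A B :
  count_mem x (msub B (mint A B)) = (count_mem x B - count_mem x A)%N.
Proof.
rewrite count_msub count_mint.
by move: (count_mem x A) (count_mem x B) => m n; lia.
Qed.

Lemma perm_mint_msub A B : perm_eq A (mint A B ++ msub A (mint A B)).
Proof.
apply/allP => x _ /=; rewrite count_cat count_mint count_msub_mint.
by move: (count_mem x A) (count_mem x B) => m n; apply/eqP; lia.
Qed.

Lemma mem_msub x A B : x \in msub A B -> x \in A.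
Proof. by rewrite -!count_mem_gt0 count_msub => /leq_trans; apply; apply: leq_subr. Qed.

End Multisets.

Lemma exists_neq0_notin (R : numDomainType) (s : seq R) : exists z, z \notin s /\ z != 0.
Proof.
pose l := [seq i.+1%:R : R | i <- iota 0 (size s).+1].
have ul : uniq l.
  by rewrite map_inj_uniq ?iota_uniq // => i j /eqP; rewrite eqr_nat => /eqP [].
have : ~~ all (mem s) l.
  apply/negP => /allP sub; have := uniq_leq_size ul sub.
  by rewrite size_map size_iota ltnn.
case/allPn => _ /mapP[i _ ->] zs; exists i.+1%:R; split => //.
by rewrite pnatr_eq0.
Qed.

Lemma poly_eq0_of_roots (F : closedFieldType) (P : {poly F}) :
  (forall s : seq F, exists z, z \notin s /\ P.[z] = 0) -> P = 0.
Proof.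
move=> h; apply/eqP/negPn/negP => P0.
have [rs Prs] := closed_field_poly_normal P.
have [z [zrs Pz]] := h rs; move: Pz; rewrite Prs hornerZ horner_prod => /eqP.
rewrite mulf_eq0 lead_coef_eq0 (negbTE P0) /= prodf_seq_eq0 => /hasP[x xrs /=].
by rewrite hornerXsubC subr_eq0 => /eqP zx; move: zrs; rewrite zx xrs.
Qed.

Section ZerosAndModulus.
Variable C : numClosedFieldType.
Implicit Types (x y z c : C) (r s : seq C) (a b : {poly C}).

Definition zpoly c r : {poly C} := c *: \prod_(x <- r) ('X - x%:P).

Definition sym_poly r : {poly C} := \prod_(x <- sym_mset r) ('X - x%:P).

(* The constant K with a(z) a^*(z) = K z^-m sym_poly(z) for a = zpoly c r, m = size r. *)
Definition modulus_const c r := c * c^* * \prod_(x <- r) (- x^*).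

Lemma lead_coef_zpoly c r : lead_coef (zpoly c r) = c.
Proof. by rewrite lead_coefZ lead_coef_prod_XsubC mulr1. Qed.

Lemma size_zpoly c r : c != 0 -> size (zpoly c r) = (size r).+1.
Proof. by move=> c0; rewrite size_scale // size_prod_XsubC. Qed.

Lemma horner0_zpoly c r : (zpoly c r).[0] = c * \prod_(x <- r) (- x).
Proof.
rewrite hornerZ horner_prod; congr (_ * _).
by apply: eq_bigr => x _; rewrite hornerXsubC sub0r.
Qed.

Lemma zeros_of_neq0 a r : zeros_of a r -> a.[0] != 0 -> lead_coef a != 0 /\ 0 \notin r.
Proof.
move=> Za; have -> : a = zpoly (lead_coef a) r := Za.
rewrite horner0_zpoly lead_coef_zpoly mulf_eq0 negb_or => /andP[-> P0]; split=> //.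
apply: contra P0 => r0; rewrite prodf_seq_eq0; apply/hasP.
by exists 0 => //=; rewrite oppr0.
Qed.

Lemma conjC_invc_sub x z : x != 0 -> z != 0 ->
  (invc z - x)^* = - x^* * (z - invc x) / z.
Proof.
move=> x0 z0; have cx0 : x^* != 0 by rewrite conjC_eq0.
rewrite /invc rmorphB /= fmorphV /= conjCK; field; exact/andP.
Qed.

Lemma prod_conjC_invc_sub r z : 0 \notin r -> z != 0 ->
  \prod_(x <- r) (invc z - x)^* =
  \prod_(x <- r) (- x^*) * \prod_(x <- r) (z - invc x) / z ^+ size r.
Proof.
move=> + z0; elim: r => [|x r IH] /=; first by rewrite !big_nil expr0 invr1 !mulr1.
rewrite in_cons negb_or eq_sym => /andP[x0 /IH{}IH].
by rewrite !big_cons IH conjC_invc_sub // exprS invfM; ring.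
Qed.

Lemma horner_zpoly_modulus c r z : z != 0 -> 0 \notin r ->
  (zpoly c r).[z] * pstar (zpoly c r) z =
  modulus_const c r * (sym_poly r).[z] / z ^+ size r.
Proof.
move=> z0 r0; rewrite /pstar /sym_poly /modulus_const !hornerZ !horner_prod rmorphM.
rewrite rmorph_prod big_cat big_map /=.
have evalX (F : C -> C) (G : C -> C) w :
    \prod_(i <- r) G ('X - (F i)%:P).[w] = \prod_(i <- r) G (w - F i).
  by apply: eq_bigr => i _; rewrite hornerXsubC.
rewrite (evalX id id) (evalX id (fun w => w^*)) (evalX (@invc C) id) prod_conjC_invc_sub //.
ring.
Qed.

Lemma same_modulus_zpoly_eq ca cb ra rb : 0 \notin ra -> 0 \notin rb ->
  same_modulus (zpoly ca ra) (zpoly cb rb) ->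
  modulus_const ca ra *: (sym_poly ra * 'X^(size rb)) =
  modulus_const cb rb *: (sym_poly rb * 'X^(size ra)).
Proof.
move=> ra0 rb0 SM; apply/eqP; rewrite -subr_eq0; apply/eqP.
apply: poly_eq0_of_roots => s; have [z [zs [z0 E]]] := SM s; exists z; split=> //.
move: E; rewrite !horner_zpoly_modulus // => E.
have zm0 : z ^+ size ra != 0 by rewrite expf_neq0.
have zn0 : z ^+ size rb != 0 by rewrite expf_neq0.
have {}E : modulus_const ca ra * (sym_poly ra).[z] =
    modulus_const cb rb * (sym_poly rb).[z] / z ^+ size rb * z ^+ size ra.
  by rewrite -E divfK.
by rewrite hornerD hornerN !hornerZ !hornerM !hornerXn mulrA E; field.
Qed.

Lemma sym_poly_monic r : sym_poly r \is monic.
Proof. exact: monic_prod_XsubC. Qed.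

Lemma size_sym_poly r : size (sym_poly r) = (size r + size r).+1.
Proof. by rewrite size_prod_XsubC size_cat size_map. Qed.

Lemma modulus_const_neq0 c r : c != 0 -> 0 \notin r -> modulus_const c r != 0.
Proof.
move=> c0 r0; rewrite !mulf_neq0 ?conjC_eq0 // prodf_seq_neq0_notin0 // => x.
by rewrite oppr_eq0 conjC_eq0.
Qed.

Lemma same_modulus_zeros a b ra rb : a.[0] != 0 -> b.[0] != 0 ->
  zeros_of a ra -> zeros_of b rb -> same_modulus a b ->
  [/\ size ra = size rb, perm_eq (sym_mset ra) (sym_mset rb)
    & modulus_const (lead_coef a) ra = modulus_const (lead_coef b) rb].
Proof.
move=> a0 b0 Za Zb SM.
have [ca0 ra0] := zeros_of_neq0 Za a0; have [cb0 rb0] := zeros_of_neq0 Zb b0.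
have Ka0 := modulus_const_neq0 ca0 ra0; have Kb0 := modulus_const_neq0 cb0 rb0.
have Za' : a = zpoly (lead_coef a) ra := Za; have Zb' : b = zpoly (lead_coef b) rb := Zb.
rewrite {1}Za' {1}Zb' in SM; have E := same_modulus_zpoly_eq ra0 rb0 SM.
have Xmonic n : 'X^n \is @monic C by apply: monicXn.
have sz : size ra = size rb.
  move: (congr1 (fun p : {poly C} => size p) E).
  rewrite !size_scale // !size_Mmonic ?monic_neq0 ?sym_poly_monic //.
  by rewrite !size_sym_poly !size_polyXn; move: (size ra) (size rb) => m n; lia.
move: E; rewrite -sz !scalerAl => /mulIf E.
have {}E := E (monic_neq0 (Xmonic _)).
have KE : modulus_const (lead_coef a) ra = modulus_const (lead_coef b) rb.
  by move: (congr1 lead_coef E); rewrite !lead_coefZ !(monicP (sym_poly_monic _)) !mulr1.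
split=> //; move: E; rewrite KE => /(scalerI Kb0).
exact: prod_XsubC_eq.
Qed.

Lemma same_modulus_size a b : a.[0] != 0 -> b.[0] != 0 -> same_modulus a b ->
  size a = size b.
Proof.
move=> a0 b0 SM; have [ra Za] := closed_field_poly_normal a.
have [rb Zb] := closed_field_poly_normal b.
have [sz _ _] := same_modulus_zeros a0 b0 Za Zb SM.
have [ca0 _] := zeros_of_neq0 Za a0; have [cb0 _] := zeros_of_neq0 Zb b0.
by rewrite Za Zb !size_zpoly // sz.
Qed.

Lemma same_modulusN a b : same_modulus a (- b) <-> same_modulus a b.
Proof.
have modN z : (- b).[z] * pstar (- b) z = b.[z] * pstar b z.
  by rewrite /pstar !hornerN rmorphN mulrNN.
by split=> SM s; have [z [zs [z0 E]]] := SM s; exists z; rewrite -?modN -?E ?modN.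
Qed.

End ZerosAndModulus.

Definition excess_prod (C : numClosedFieldType) (ra rb : seq C) : C :=
  \prod_(y <- msub ra (mint ra rb)) y.

Section Excess.
Variable C : numClosedFieldType.
Variables ra rb : seq C.
Hypothesis sym_ab : perm_eq (sym_mset ra) (sym_mset rb).

Local Notation Rab := (mint ra rb).
Local Notation bRa := (msub ra Rab).
Local Notation bRb := (msub rb Rab).

Lemma count_sym_balance x :
  (count_mem x ra + count_mem (invc x) ra = count_mem x rb + count_mem (invc x) rb)%N.
Proof. by rewrite -!count_sym_mset; apply/permP. Qed.

Lemma count_unit_zeros y : `|y| = 1 ->
  count_mem y ra = count_mem y rb /\ count_mem y ra = count_mem y Rab.
Proof.
move=> /invc_norm1 y1; have := count_sym_balance y; rewrite y1 count_mint.
by move: (count_mem y ra) (count_mem y rb) => m n; split; lia.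
Qed.

Lemma excess_off_circle : all (fun y => `|y| != 1) bRa /\ all (fun y => `|y| != 1) bRb.
Proof.
split; apply/allP => y; rewrite -count_mem_gt0 ?count_msub_mint ?count_msub_mintr;
  apply: contraTN => /eqP y1; have [] := count_unit_zeros y1;
  by move: (count_mem y ra) (count_mem y rb) => m n; lia.
Qed.

Lemma excess_reflect :
  (forall y, y \in bRa -> [/\ y \notin bRb, invc y \notin bRa
                           & count_mem (invc y) bRb = count_mem y bRa])
  /\ (forall y, y \in bRb -> [/\ y \notin bRa, invc y \notin bRb
                           & count_mem (invc y) bRa = count_mem y bRb]).
Proof.
split=> y; rewrite -!count_mem_gt0 !count_msub_mint !count_msub_mintr;
  have := count_sym_balance y;
  move: (count_mem y ra) (count_mem y rb) (count_mem (invc y) ra)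
    (count_mem (invc y) rb) => m n m' n' bal; rewrite -!leqNgt; split; lia.
Qed.

Lemma perm_excess : perm_eq bRb (map (@invc C) bRa).
Proof.
apply/allP => x _ /=; rewrite count_map_invc count_msub_mintr count_msub_mint.
have := count_sym_balance x.
by move: (count_mem x ra) (count_mem x rb) (count_mem (invc x) ra)
  (count_mem (invc x) rb) => m n m' n' bal; apply/eqP; lia.
Qed.

Lemma perm_zeros_excess : perm_eq rb (Rab ++ map (@invc C) bRa).
Proof.
apply/allP => x _ /=; rewrite count_cat count_map_invc count_mint count_msub_mint.
have := count_sym_balance x.
by move: (count_mem x ra) (count_mem x rb) (count_mem (invc x) ra)
  (count_mem (invc x) rb) => m n m' n' bal; apply/eqP; lia.
Qed.

Lemma excess_size_prod :
  size bRa = size bRb /\ \prod_(y <- bRa) y = \prod_(y <- bRb) invc y.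
Proof.
rewrite (perm_size perm_excess) size_map (perm_big _ perm_excess) big_map.
by split=> //; apply: eq_bigr => y _; rewrite invcK.
Qed.

Hypothesis ra0 : 0 \notin ra.

Lemma prod_conj_excess :
  \prod_(x <- rb) (- x^*) * (excess_prod ra rb * (excess_prod ra rb)^*) =
  \prod_(x <- ra) (- x^*).
Proof.
rewrite /excess_prod (perm_big _ (perm_mint_msub ra rb)) (perm_big _ perm_zeros_excess).
rewrite !big_cat big_map -mulrA /=; congr (_ * _).
under eq_bigr do rewrite conjC_invc.
by rewrite prod_oppV_mul_conj //; apply: contra ra0; apply: mem_msub.
Qed.

End Excess.

Lemma excess_prod_neq0 (C : numClosedFieldType) (ra rb : seq C) :
  0 \notin ra -> excess_prod ra rb != 0.
Proof.
by move=> ra0; apply: prodf_seq_neq0_notin0 => //; apply: contra ra0; apply: mem_msub.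
Qed.

Section LeadingCoefficient.
Variable C : numClosedFieldType.
Variables (a b : {poly C}) (ra rb : seq C).
Hypotheses (a0 : a.[0] != 0) (b0 : b.[0] != 0).
Hypotheses (Za : zeros_of a ra) (Zb : zeros_of b rb) (SM : same_modulus a b).

Lemma norm_lead_coef_excess :
  `|lead_coef b| = `|lead_coef a| * `|excess_prod ra rb|.
Proof.
have [_ sym_ab KE] := same_modulus_zeros a0 b0 Za Zb SM.
have [_ ra0] := zeros_of_neq0 Za a0; have [_ rb0] := zeros_of_neq0 Zb b0.
have Prb0 : \prod_(x <- rb) (- x^*) != 0.
  by apply: prodf_seq_neq0_notin0 => // x; rewrite oppr_eq0 conjC_eq0.
move: KE; rewrite /modulus_const -(prod_conj_excess sym_ab ra0) => KE.
apply: (@pexpIrn _ 2) => //; rewrite ?nnegrE ?mulr_ge0 // exprMn !normCK.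
by apply: (mulIf Prb0); rewrite -KE; ring.
Qed.

Lemma lead_coef_excess : exists lambda : C,
  `|lambda| = 1 /\ lead_coef b = lambda * lead_coef a * `|excess_prod ra rb|.
Proof.
have [ca0 ra0] := zeros_of_neq0 Za a0; have [cb0 _] := zeros_of_neq0 Zb b0.
have d0 : lead_coef a * `|excess_prod ra rb| != 0.
  by rewrite mulf_neq0 // normr_eq0 excess_prod_neq0.
exists (lead_coef b / (lead_coef a * `|excess_prod ra rb|)); split.
  by rewrite normrM normfV normrM normr_id -norm_lead_coef_excess divff // normr_eq0.
by rewrite -mulrA divfK.
Qed.

End LeadingCoefficient.

Section Halves.
Variable C : numClosedFieldType.
Implicit Types (x y : C) (r R : seq C) (L opts : seq (seq C)).

Definition rm_class R y := [seq x <- R | ~~ eqv x y].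

Definition half_enum R L :=
  [/\ uniq L, {in L, forall r, is_half R r},
      (forall r, is_half R r -> exists2 r', r' \in L & perm_eq r r')
    & {in L &, forall r1 r2, perm_eq r1 r2 -> r1 = r2}].

(* opts lists the possible restrictions of a half of R to the class of y. *)
Definition class_choices R y opts :=
  [/\ uniq opts,
      {in opts, forall o x, (count_mem x o + count_mem (invc x) o =
                             if eqv x y then count_mem x R else 0)%N},
      {in opts &, forall o1 o2, count_mem y o1 = count_mem y o2 -> o1 = o2}
    & forall r, is_half R r ->
        exists2 o, o \in opts & forall x, eqv x y -> count_mem x o = count_mem x r].

Lemma count_rm_class x R y :
  count_mem x (rm_class R y) = if eqv x y then 0%N else count_mem x R.
Proof.
rewrite count_filter; case: ifP => xy.
  by rewrite -(count_pred0 R); apply: eq_count => z /=; case: eqP => // ->; rewrite xy.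
by apply: eq_count => z /=; case: eqP => // ->; rewrite xy.
Qed.

Lemma is_half_rm_class R y r : is_half R r -> is_half (rm_class R y) (rm_class r y).
Proof. by move=> hr x; rewrite !count_rm_class eqv_invc; case: ifP. Qed.

Lemma count_half_rm_class R y r x :
  is_half (rm_class R y) r -> eqv x y -> count_mem x r = 0%N.
Proof.
move=> /(_ x) + xy; rewrite count_rm_class xy => /eqP.
by rewrite addn_eq0 => /andP[/eqP].
Qed.

Lemma half_enum_nil : half_enum [::] [:: [::]].
Proof.
split=> //.
- by move=> r; rewrite inE => /eqP -> x.
- move=> [|x r] hr; first by exists [::]; rewrite ?inE.
  by have := hr x; rewrite /= eqxx.
- by move=> r1 r2; rewrite !inE => /eqP -> /eqP ->.
Qed.

Lemma half_enum_cat R y opts L : class_choices R y opts -> half_enum (rm_class R y) L ->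
  half_enum R [seq o ++ r | o <- opts, r <- L].
Proof.
case=> Ou Oh Oinj Osurj [Lu Lh Lsurj Linj].
have Ooff o x : o \in opts -> ~~ eqv x y -> count_mem x o = 0%N.
  move=> oin xy; have := Oh o oin x; rewrite (negbTE xy) => /eqP.
  by rewrite addn_eq0 => /andP[/eqP].
have cat_perm o1 o2 r1 r2 : o1 \in opts -> o2 \in opts -> r1 \in L -> r2 \in L ->
    perm_eq (o1 ++ r1) (o2 ++ r2) -> o1 = o2 /\ r1 = r2.
  move=> o1in o2in r1in r2in /permP p12.
  have c1 := count_half_rm_class (Lh _ r1in) (eqv_refl y).
  have c2 := count_half_rm_class (Lh _ r2in) (eqv_refl y).
  have o12 : o1 = o2.
    by apply: Oinj => //; move: (p12 (pred1 y)); rewrite !count_cat c1 c2 !addn0.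
  split=> //; apply: Linj => //; rewrite -(perm_cat2l o1) {2}o12; exact/permP.
split.
- apply: allpairs_uniq => // -[? ?] [? ?] /allpairsP[[o1 r1] [/= o1in r1in [-> ->]]].
  case/allpairsP=> [[o2 r2] [/= o2in r2in [-> ->]]] /= E.
  have p12 : perm_eq (o1 ++ r1) (o2 ++ r2) by rewrite E.
  by have [-> ->] := cat_perm _ _ _ _ o1in o2in r1in r2in p12.
- move=> _ /allpairsP[[o r] [/= oin rin ->]] x.
  rewrite !count_cat addnACA Oh // (Lh _ rin) count_rm_class.
  by case: ifP => _; rewrite ?addn0.
- move=> r hr; have [o oin Eo] := Osurj r hr.
  have [r' r'in pr'] := Lsurj _ (is_half_rm_class y hr).
  exists (o ++ r'); first exact: allpairs_f.
  apply: (@perm_trans _ (o ++ rm_class r y)); last by rewrite perm_cat2l.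
  apply/allP => x _ /=; apply/eqP; rewrite count_cat count_rm_class.
  by case: ifP => xy; [rewrite Eo // addn0 | rewrite (Ooff _ _ oin) ?xy].
- move=> _ _ /allpairsP[[o1 r1] [/= o1in r1in ->]] /allpairsP[[o2 r2] [/= o2in r2in ->]] p.
  by have [-> ->] := cat_perm _ _ _ _ o1in o2in r1in r2in p.
Qed.

Definition sym_closed R :=
  [/\ forall x, count_mem (invc x) R = count_mem x R,
      forall x, invc x = x -> ~~ odd (count_mem x R) & 0 \notin R].

Lemma sym_closed_rm_class R y : sym_closed R -> sym_closed (rm_class R y).
Proof.
case=> Rinv Rodd R0; split.
- by move=> x; rewrite !count_rm_class eqv_invc Rinv.
- by move=> x xx; rewrite count_rm_class; case: ifP => _; rewrite ?Rodd.
- by rewrite mem_filter negb_and R0 orbT.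
Qed.

Lemma class_choices_fixed R y : sym_closed R -> invc y = y ->
  class_choices R y [:: nseq (count_mem y R)./2 y].
Proof.
case=> _ Rodd _ yy; set k := count_mem y R.
have eqvy x : eqv x y = (x == y) by rewrite /eqv yy orbb.
have kk : (k./2 + k./2)%N = k by rewrite addnn halfK (negbTE (Rodd y yy)) subn0.
split=> //.
- move=> o; rewrite inE => /eqP -> x; rewrite !count_nseq eqvy /=.
  case: (eqVneq x y) => [->|xy]; first by rewrite yy eqxx mul1n kk.
  by rewrite eq_sym invc_eq yy (negbTE xy).
- by move=> o1 o2; rewrite !inE => /eqP -> /eqP ->.
- move=> r hr; exists (nseq k./2 y); rewrite ?inE // => x; rewrite eqvy => /eqP ->.
  by have := hr y; rewrite yy -/k => <-; rewrite count_nseq /= eqxx mul1n addnn doubleK.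
Qed.

Lemma class_choices_moved R y : sym_closed R -> invc y != y ->
  class_choices R y [seq nseq j y ++ nseq (count_mem y R - j) (invc y)
                      | j <- iota 0 (count_mem y R).+1].
Proof.
case=> Rinv _ _ yy; set k := count_mem y R; set o := fun j => _.
have cy j : count_mem y (o j) = j.
  by rewrite count_cat !count_nseq /= eqxx (negbTE yy) mul1n mul0n addn0.
have cy' j : count_mem (invc y) (o j) = (k - j)%N.
  by rewrite count_cat !count_nseq /= eqxx eq_sym (negbTE yy) mul1n mul0n.
have cx j x : ~~ eqv x y -> count_mem x (o j) = 0%N.
  rewrite /eqv negb_or => /andP[xy xy'].
  by rewrite count_cat !count_nseq /= eq_sym (negbTE xy) eq_sym (negbTE xy').
split.
- by rewrite map_inj_uniq ?iota_uniq // => j1 j2 /(congr1 (count_mem y)); rewrite !cy.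
- move=> o' /mapP[j]; rewrite mem_iota add0n ltnS => jk -> x.
  case: (boolP (eqv x y)) => [|xy]; last by rewrite !cx // eqv_invc.
  rewrite /eqv => /orP[/eqP->|/eqP->]; first by rewrite cy cy'; lia.
  by rewrite invcK cy cy' Rinv; lia.
- by move=> _ _ /mapP[j1 _ ->] /mapP[j2 _ ->]; rewrite !cy => ->.
- move=> r hr; have hk := hr y; rewrite -/k in hk.
  exists (o (count_mem y r)).
    by apply/mapP; exists (count_mem y r); rewrite // mem_iota add0n ltnS -hk leq_addr.
  move=> x; rewrite /eqv => /orP[/eqP->|/eqP->]; first by rewrite cy.
  by rewrite cy' -hk addKn.
Qed.

Lemma eclass_eqv R y z : eqv y z -> eclass R y = eclass R z.
Proof.
move=> yz; apply: eq_filter => x; apply/idP/idP => xe; first exact: eqv_trans xe yz.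
by apply: eqv_trans xe _; rewrite eqv_sym.
Qed.

Lemma eclass_rm_class R y z : ~~ eqv z y -> eclass (rm_class R y) z = eclass R z.
Proof.
move=> zy; rewrite /eclass /rm_class -filter_predI; apply: eq_filter => x /=.
case: (boolP (eqv x z)) => xz; rewrite ?andbF ?andbT //.
by apply: contra zy => xy; apply: eqv_trans xy; rewrite eqv_sym.
Qed.

Lemma perm_eclasses_rm_class R y : y \in R ->
  perm_eq (eclasses R) (eclass R y :: eclasses (rm_class R y)).
Proof.
move=> yR; apply: uniq_perm; rewrite /= ?undup_uniq ?andbT //.
  rewrite mem_undup; apply/mapP => -[z zR' E].
  have : y \in eclass R y by rewrite mem_filter eqv_refl.
  by rewrite E mem_filter => /andP[_]; rewrite mem_filter eqv_refl.
move=> c; rewrite inE !mem_undup; apply/mapP/idP.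
  case=> z zR ->; case: (boolP (eqv z y)) => zy; first by rewrite (eclass_eqv R zy) eqxx.
  by apply/orP; right; apply/mapP; exists z; rewrite ?eclass_rm_class // mem_filter zy.
case/orP => [/eqP ->|/mapP[z]]; first by exists y.
by rewrite mem_filter => /andP[zy zR] ->; exists z; rewrite ?eclass_rm_class.
Qed.

Lemma Ncount_rm_class R y : y \in R ->
  Ncount R = (sharp (eclass R y) * Ncount (rm_class R y))%N.
Proof. by move=> yR; rewrite /Ncount (perm_big _ (perm_eclasses_rm_class yR)) big_cons. Qed.

Lemma sharp_eclass_fixed R y : y \in R -> y != 0 -> invc y = y ->
  sharp (eclass R y) = 1%N.
Proof.
move=> yR y0 yy; rewrite /sharp; case: hasP => // -[]; exists y.
  by rewrite mem_filter eqv_refl.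
by rewrite -invc_fixE // yy.
Qed.

Lemma sharp_eclass_moved R y : sym_closed R -> invc y != y ->
  sharp (eclass R y) = (count_mem y R).+1.
Proof.
case=> Rinv _ _ yy.
have y0 : y != 0 by apply: contraNneq yy => ->; rewrite /invc conjC0 invr0.
have off x : eqv x y -> `|x| != 1.
  rewrite /eqv => /orP[/eqP->|/eqP->]; first by rewrite -invc_fixE.
  by rewrite -invc_fixE ?invc_eq0 // invcK eq_sym.
rewrite /sharp; case: hasP => [[x] |_]; first by rewrite mem_filter => /andP[/off/negbTE ->].
have -> : size (eclass R y) = (count_mem y R + count_mem y R)%N.
  rewrite size_filter -{2}(Rinv y) -count_predUI.
  rewrite (@eq_count _ (predI _ _) pred0) ?count_pred0 ?addn0.
    by apply: eq_count => x; rewrite /eqv.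
  by move=> x /=; apply/negP => /andP[/eqP -> /eqP yE]; move: yy; rewrite -yE eqxx.
by rewrite addnn divn2 doubleK add1n.
Qed.

Lemma exists_half_enum R : sym_closed R -> exists2 L, half_enum R L & size L = Ncount R.
Proof.
move: {2}(size R) (leqnn (size R)) => n; elim: n R => [|n IH] [|y R] //= Rn Rsym;
  try by exists [:: [::]]; rewrite /Ncount /eclasses ?big_nil //; apply: half_enum_nil.
have yR : y \in y :: R by rewrite inE eqxx.
have Rsz : (size (rm_class (y :: R) y) <= n)%N.
  by rewrite /= eqv_refl /= size_filter (leq_trans (count_size _ _)).
have [L enumL sizeL] := IH _ Rsz (sym_closed_rm_class y Rsym).
have y0 : y != 0 by case: Rsym => _ _; apply: contraNneq => ->; rewrite inE eqxx.
case: (eqVneq (invc y) y) => yy.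
- exists [seq o ++ r | o <- [:: nseq (count_mem y (y :: R))./2 y], r <- L].
    exact: half_enum_cat (class_choices_fixed Rsym yy) enumL.
  by rewrite size_allpairs (Ncount_rm_class yR) sharp_eclass_fixed // sizeL.
- exists [seq o ++ r | o <- [seq nseq j y ++ nseq (count_mem y (y :: R) - j) (invc y)
                             | j <- iota 0 (count_mem y (y :: R)).+1], r <- L].
    exact: half_enum_cat (class_choices_moved Rsym yy) enumL.
  rewrite size_allpairs size_map size_iota (Ncount_rm_class yR).
  by rewrite sharp_eclass_moved // sizeL.
Qed.

Lemma sym_closed_sym_mset r : 0 \notin r -> sym_closed (sym_mset r).
Proof.
move=> r0; split.
- by move=> x; rewrite !count_sym_mset invcK addnC.
- by move=> x xx; rewrite count_sym_mset xx addnn odd_double.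
- rewrite mem_cat negb_or r0 /=; apply/mapP => -[x xr /esym/eqP].
  by rewrite invc_eq0; apply/negP; apply: contraNneq r0 => <-.
Qed.

Lemma half_notin0 R r : sym_closed R -> is_half R r -> 0 \notin r.
Proof.
case=> _ _ R0 /(_ 0) h; apply: contra R0 => r0.
by rewrite -count_mem_gt0 -h ltn_addr // count_mem_gt0.
Qed.

End Halves.

Section PositiveSolutions.
Variable C : numClosedFieldType.
Variables (a : {poly C}) (ra : seq C).
Hypotheses (a0 : a.[0] != 0) (Za : zeros_of a ra).
Implicit Types (b : {poly C}) (r : seq C).

(* By part (e) the leading coefficient of a solution with zeros r has modulus
   pos_norm r; its argument is then fixed by the sign of b(0). *)
Definition pos_norm r := `|lead_coef a| * `|excess_prod ra r|.

Definition pos_lead r := pos_norm r * `|\prod_(x <- r) (- x)| / \prod_(x <- r) (- x).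

Definition pos_solution r : {poly C} := zpoly (pos_lead r) r.

Lemma pos_norm_gt0 r : 0 < pos_norm r.
Proof.
have [ca0 ra0] := zeros_of_neq0 Za a0.
by rewrite mulr_gt0 // normr_gt0 // excess_prod_neq0.
Qed.

Section Half.
Variable r : seq C.
Hypothesis half_r : is_half (sym_mset ra) r.

Let r0 : 0 \notin r.
Proof.
by apply: half_notin0 half_r; apply: sym_closed_sym_mset; case: (zeros_of_neq0 Za a0).
Qed.

Let q0 : \prod_(x <- r) (- x) != 0.
Proof. by apply: prodf_seq_neq0_notin0 => // x; rewrite oppr_eq0. Qed.

Lemma norm_pos_lead : `|pos_lead r| = pos_norm r.
Proof.
rewrite normrM normfV normrM normr_id (gtr0_norm (pos_norm_gt0 r)).
by rewrite mulfK // normr_eq0.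
Qed.

Lemma horner0_pos_solution :
  (pos_solution r).[0] = pos_norm r * `|\prod_(x <- r) (- x)|.
Proof. by rewrite horner0_zpoly mulfVK. Qed.

Lemma pos_solution_spec :
  [/\ (pos_solution r).[0] != 0, same_modulus a (pos_solution r)
    & 0 < (pos_solution r).[0]].
Proof.
have [ca0 ra0] := zeros_of_neq0 Za a0.
have pos : 0 < (pos_solution r).[0].
  by rewrite horner0_pos_solution mulr_gt0 ?pos_norm_gt0 // normr_gt0.
split=> //; first by rewrite gt_eqF.
have sym_r : perm_eq (sym_mset ra) (sym_mset r) by rewrite perm_sym; apply/perm_sym_mset_half.
have sz : size r = size ra.
  move: (perm_size sym_r); rewrite !size_cat !size_map => /(congr1 half).
  by rewrite !addnn !doubleK.
have EQ : sym_poly r = sym_poly ra by rewrite /sym_poly (perm_big _ sym_r).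
have EK : modulus_const (pos_lead r) r = modulus_const (lead_coef a) ra.
  rewrite /modulus_const -(prod_conj_excess sym_r ra0) -!normCK.
  by rewrite norm_pos_lead /pos_norm exprMn !normCK; ring.
move=> s; have [z [zs z0]] := exists_neq0_notin s; exists z; split=> //; split=> //.
have -> : a = zpoly (lead_coef a) ra := Za.
by rewrite !horner_zpoly_modulus // EQ EK sz.
Qed.

Lemma pos_solution_unique b : b.[0] != 0 -> same_modulus a b -> 0 < b.[0] ->
  zeros_of b r -> b = pos_solution r.
Proof.
move=> b0 SM bpos Zb; have Zb' : b = zpoly (lead_coef b) r := Zb.
have [_ _ spos] := pos_solution_spec.
have nb : `|lead_coef b| = pos_norm r := norm_lead_coef_excess a0 b0 Za Zb SM.
rewrite Zb'; congr zpoly; apply: (mulIf q0).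
rewrite -!horner0_zpoly -Zb' -(gtr0_norm bpos) -(gtr0_norm spos).
rewrite {1}Zb' !horner0_zpoly (normrM (lead_coef b)) (normrM (pos_lead r)).
by rewrite nb norm_pos_lead.
Qed.

Lemma pos_solution_inj r' : pos_solution r' = pos_solution r -> perm_eq r' r.
Proof.
move=> E; have Ec := congr1 lead_coef E; rewrite !lead_coef_zpoly in Ec.
have c0 : pos_lead r != 0 by rewrite -normr_eq0 norm_pos_lead gt_eqF ?pos_norm_gt0.
by move: E; rewrite /pos_solution /zpoly Ec => /(scalerI c0)/prod_XsubC_eq.
Qed.

End Half.

Lemma count_pos_solutions : exists s : seq {poly C}, [/\ uniq s,
  (forall b, b \in s <-> [/\ b.[0] != 0, same_modulus a b & 0 < b.[0]])
  & size s = Ncount (sym_mset ra)].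
Proof.
have [_ ra0] := zeros_of_neq0 Za a0.
have [L [Lu Lh Lsurj Linj] sizeL] := exists_half_enum (sym_closed_sym_mset ra0).
exists (map pos_solution L); split; last by rewrite size_map.
- rewrite map_inj_in_uniq // => r1 r2 r1L r2L E.
  exact/Linj/(pos_solution_inj (Lh _ r2L)).
- move=> b; split => [/mapP[r rL ->]|[b0 SM bpos]]; first exact: pos_solution_spec (Lh _ rL).
  have [rb Zb] := closed_field_poly_normal b.
  have [_ sym_ab _] := same_modulus_zeros a0 b0 Za Zb SM.
  have [r rL rbr] : exists2 r, r \in L & perm_eq rb r.
    by apply/Lsurj/perm_sym_mset_half; rewrite perm_sym.
  have Zb' : zeros_of b r by rewrite /zeros_of -(perm_big _ rbr).
  by apply/mapP; exists r; last exact: (pos_solution_unique (Lh _ rL) b0 SM bpos Zb').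
Qed.

Lemma count_neg_solutions : exists s : seq {poly C}, [/\ uniq s,
  (forall b, b \in s <-> [/\ b.[0] != 0, same_modulus a b & b.[0] < 0])
  & size s = Ncount (sym_mset ra)].
Proof.
have [s [us ms ss]] := count_pos_solutions.
exists (map -%R s); split; rewrite ?size_map ?(map_inj_uniq oppr_inj) //.
move=> b; rewrite -{1}[b]opprK (mem_map oppr_inj) ms hornerN oppr_eq0 oppr_gt0.
by split=> -[? SM ?]; split=> //; [move/same_modulusN: SM | apply/same_modulusN].
Qed.

End PositiveSolutions.

Theorem lemmaA1 (C : numClosedFieldType) (a : {poly C}) (ha0 : a.[0] != 0) :
  (forall b : {poly C}, b.[0] != 0 -> same_modulus a b ->
     size a = size b /\
     forall ra rb : seq C, zeros_of a ra -> zeros_of b rb ->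
       let Rab := mint ra rb in
       let bRa := msub ra Rab in
       let bRb := msub rb Rab in
       [/\ (* (a) *)
           perm_eq (ra ++ map (@invc C) ra) (rb ++ map (@invc C) rb),
           (* (b) *)
           (forall y : C, `|y| = 1 ->
              count_mem y ra = count_mem y rb /\ count_mem y ra = count_mem y Rab)
           /\ (all (fun y => `|y| != 1) bRa /\ all (fun y => `|y| != 1) bRb),
           (* (c) *)
           (forall y : C, y \in bRa ->
              [/\ y \notin bRb, invc y \notin bRa
                & count_mem (invc y) bRb = count_mem y bRa])
           /\ (forall y : C, y \in bRb ->
              [/\ y \notin bRa, invc y \notin bRb
                & count_mem (invc y) bRa = count_mem y bRb]),
           (* (d) *)
           size bRa = size bRb /\
           \prod_(y <- bRa) y = \prod_(y <- bRb) invc y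
         & (* (e) *)
           exists lambda : C, `|lambda| = 1 /\
             lead_coef b = lambda * lead_coef a * `|\prod_(y <- bRa) y| ]) /\
  (* (f) *)
  (forall ra : seq C, zeros_of a ra ->
     let R := ra ++ map (@invc C) ra in
     (exists s : seq {poly C}, [/\ uniq s,
        (forall b, b \in s <-> [/\ b.[0] != 0, same_modulus a b & 0 < b.[0]])
        & size s = Ncount R]) /\
     (exists s : seq {poly C}, [/\ uniq s,
        (forall b, b \in s <-> [/\ b.[0] != 0, same_modulus a b & b.[0] < 0])
        & size s = Ncount R])).
Proof.
split=> [b b0 SM | ra Za]; last first.
  by split; [apply: count_pos_solutions | apply: count_neg_solutions].
split=> [|ra rb Za Zb Rab bRa bRb]; first exact: same_modulus_size.
have [_ sym_ab _] := same_modulus_zeros ha0 b0 Za Zb SM.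
split=> //.
- by split; [apply: count_unit_zeros | apply: excess_off_circle].
- exact: excess_reflect.
- exact: excess_size_prod.
- exact: lead_coef_excess.
Qed.
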